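(* Let $T$ be a finite rooted tree in which every inner node has at least two children, with node set $V$ and leaf set $L$. Let $S\subseteq V\setminus L$ and let $(\pi,\sigma)$ be a pair of injective maps $S\to L$ which identifies $S$ and has unique request. Then for each $a\in\pi(S)$, the node $\pi^{-1}(a)$ is the least ancestor of $a$ which belongs to $S$.
   Context: Every node is its own ancestor and descendant. A pair $(\pi,\sigma)$ of injective maps from $S\subseteq V\setminus L$ to $L$ identifies $S$ if for each $s\in S$, $s$ is the least common ancestor of $\pi(s)$ and $\sigma(s)$. For $s\in S$, a node $x$ is $s$-requested in $(\pi,\sigma)$ if $x$ lies on the path of $T$ from $\pi(s)$ to $\sigma(s)$. The pair has unique request if every node of $T$ is $s$-requested for at most one $s\in S$. *)

(* A finite rooted tree on a finType V is given by a parent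
   map with the root as its unique fixed point and every node reaching the root. *)
From mathcomp Require Import all_boot.
Set Implicit Arguments. Unset Strict Implicit. Unset Printing Implicit Defensive.

Section Tree.
Variables (V : finType) (parent : V -> V) (root : V).

Definition rooted_tree : Prop :=
  parent root = root /\ forall v : V, exists k, iter k parent v = root.

Definition children (v : V) : {set V} := [set u | (parent u == v) && (u != root)].

Definition is_leaf (v : V) : bool := children v == set0.

Definition leaves : {set V} := [set v | is_leaf v].

Definition inner_ge2 : Prop := forall v : V, ~~ is_leaf v -> 2 <= #|children v|.

(* a is an ancestor of x (every node is its own ancestor) *)
Definition ancestor (a x : V) : Prop := exists k, iter k parent x = a.

Definition is_lca (s x y : V) : Prop :=
  ancestor s x /\ ancestor s y /\
  forall c, ancestor c x -> ancestor c y -> ancestor c s.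

(* node set of the tree path between x and y, with s = lca(x,y):
   the nodes that are descendants of s and ancestors of x or of y *)
Definition on_path (x y z : V) : Prop :=
  exists s, is_lca s x y /\ ancestor s z /\ (ancestor z x \/ ancestor z y).

Definition identifies (S : {set V}) (pi sigma : V -> V) : Prop :=
  forall s, s \in S -> is_lca s (pi s) (sigma s).

Definition requested (pi sigma : V -> V) (s x : V) : Prop := on_path (pi s) (sigma s) x.

Definition unique_request (S : {set V}) (pi sigma : V -> V) : Prop :=
  forall x s t, s \in S -> t \in S ->
    requested pi sigma s x -> requested pi sigma t x -> s = t.

End Tree.

(* If a node t of S is an ancestor of a = pi s but not of s, then, since the
   ancestors of a form a chain, t lies strictly between s and a, i.e. on the
   path from pi s to sigma s.  Being the lca of its own pair, t is also
   t-requested, so unique request forces t = s. *)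
From mathcomp Require Import all_boot.

Section Ancestors.
Set Implicit Arguments.
Variables (V : finType) (parent : V -> V).

Lemma ancestor_refl (x : V) : ancestor parent x x.
Proof. by exists 0. Qed.

Lemma ancestor_total (a b x : V) :
  ancestor parent a x -> ancestor parent b x ->
  ancestor parent a b \/ ancestor parent b a.
Proof.
move=> [i <-] [j <-]; case: (leqP i j) => [le_ij | /ltnW le_ji].
- by right; exists (j - i); rewrite -iterD subnK.
- by left; exists (i - j); rewrite -iterD subnK.
Qed.

Lemma on_path_between (s x y z : V) :
  is_lca parent s x y -> ancestor parent s z -> ancestor parent z x ->
  on_path parent x y z.
Proof. by move=> lca_s anc_sz anc_zx; exists s; split => //; split => //; left. Qed.

Lemma on_path_lca (s x y : V) : is_lca parent s x y -> on_path parent x y s.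
Proof. by move=> lca_s; apply: on_path_between lca_s (ancestor_refl s) lca_s.1. Qed.

End Ancestors.

Theorem lemma3p3 (V : finType) (parent : V -> V) (root : V)
  (Htree : rooted_tree parent root) (Hinner : inner_ge2 parent root)
  (S : {set V}) (pi sigma : V -> V)
  (HS : forall s, s \in S -> s \notin leaves parent root)
  (Hpi_leaf : forall s, s \in S -> pi s \in leaves parent root)
  (Hsigma_leaf : forall s, s \in S -> sigma s \in leaves parent root)
  (Hpi_inj : {in S &, injective pi})
  (Hsigma_inj : {in S &, injective sigma})
  (Hid : identifies parent S pi sigma)
  (Huniq : unique_request parent S pi sigma) :
  forall s, s \in S ->
    (* s = pi^-1(pi s) is the least ancestor of a := pi s lying in S *)
    ancestor parent s (pi s) /\
    forall t, t \in S -> ancestor parent t (pi s) -> ancestor parent t s.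
Proof.
move=> s sS; have lca_s := Hid s sS; have [anc_s_pis _] := lca_s.
split => // t tS anc_t_pis.
have [// | anc_st] := ancestor_total anc_t_pis anc_s_pis.
have t_req_s : requested parent pi sigma s t := on_path_between lca_s anc_st anc_t_pis.
have t_req_t : requested parent pi sigma t t := on_path_lca (Hid t tS).
by rewrite (Huniq t s t sS tS t_req_s t_req_t); apply: ancestor_refl.
Qed.
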